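(* Let $V\subset\mathbb{R}^d$ be a finite non-degenerate antichain and $k\ge 0$. A generated point $p\in S_V$ is a characteristic point of rank $k$ if and only if there is a partition $D_p=P_1\cup\dots\cup P_{k+1}$ into nonempty parts such that a subset $G\subseteq D_p$ is a minimal generating set for $p$ if and only if $|G\cap P_i|=1$ for all $i=1,\dots,k+1$. Moreover, in this case two minima $u,w\in D_p$ lie in the same part iff $T_p(u)=T_p(w)$.
   Context: For $x,y\in\mathbb{R}^d$, $x\le y$ (dominance order) means $x_i\le y_i$ for all $i$; $y\rhd x$ means $y_i>x_i$ for all $i$; $y\rhd_i x$ means $y_i=x_i$ and $y_j>x_j$ for all $j\neq i$. The join is the componentwise maximum. $V\subset\mathbb{R}^d$ is a finite antichain in the dominance order (elements are called minima). The orthogonal surface $S_V$ is the topological boundary of $\langle V\rangle=\{x: x\ge v\text{ for some }v\in V\}$; equivalently $p\in S_V$ iff there is $v\in V$ with $v\le p$ and no $w\in V$ with $p\rhd w$. For $p\in S_V$, $D_p=\{v\in V:v\le p\}$ and for $v\in D_p$, $T_p(v)=\{i: p_i=v_i\}$. A generated point is a point $p\in S_V$ equal to $\bigvee G$ for some nonempty $G\subseteq V$; such $G$ is a generating set for $p$, minimal if $\bigvee(G\setminus\{v\})\neq p$ for every $v\in G$. Flats: $U_i(v)=\{p\in S_V: p\rhd_i v\}$; for $v,w\in V$ put $v\sim_i w$ iff $U_i(v)\cap U_i(w)\neq\emptyset$, and let $\sim_i^c$ be the reflexive–transitive closure; the $i$-flat of $v$ is $F_i(v)=\overline{\bigcup_{w\sim_i^c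 v}U_i(w)}$, and an $i$-flat is any set of this form. A characteristic point is a point of $S_V$ that lies in some $i$-flat for every $i\in\{1,\dots,d\}$. $V$ is degenerate if there exist a characteristic point $p$, minima $x,u,v\in D_p$ and coordinates $i\neq j$ with $u_i<v_i=x_i=p_i$ and $v_j<u_j=x_j=p_j$; otherwise non-degenerate. For non-degenerate $V$ all minimal generating sets of a characteristic point have the same cardinality, and the rank of a characteristic point is this cardinality minus one. *)

From HB Require Import structures.
From mathcomp Require Import all_boot all_order all_algebra.
From mathcomp Require Import all_classical all_reals topology normedtype.
From Stdlib Require Import Relations.
Import numFieldTopology.Exports.
Set Implicit Arguments. Unset Strict Implicit. Unset Printing Implicit Defensive.
Import Order.TTheory GRing.Theory Num.Theory.
Local Open Scope classical_set_scope.
Local Open Scope ring_scope.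

Section OrthSurf.
Variables (R : realType) (d : nat).
Local Notation pt := 'rV[R]_d.
Definition coord (x : pt) (i : 'I_d) : R := x ord0 i.

Definition dle (x y : pt) : Prop := forall i, coord x i <= coord y i.
Definition sdom (y x : pt) : Prop := forall i, coord x i < coord y i.
Definition sdom_i (i : 'I_d) (y x : pt) : Prop :=
  coord y i = coord x i /\ forall j, j != i -> coord x j < coord y j.

Definition antichain (V : set pt) : Prop :=
  forall v w, V v -> V w -> dle v w -> v = w.

Definition surface (V : set pt) (p : pt) : Prop :=
  (exists2 v, V v & dle v p) /\ ~ (exists2 w, V w & sdom p w).

Definition Dset (V : set pt) (p : pt) : set pt := [set v | V v /\ dle v p].

Definition Tset (p v : pt) : set 'I_d := [set i | coord p i = coord v i].

Definition is_join (G : set pt) (p : pt) : Prop :=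
  G !=set0 /\ forall i, (forall v, G v -> coord v i <= coord p i) /\ (exists2 v, G v & coord v i = coord p i).

Definition generated (V : set pt) (p : pt) : Prop :=
  surface V p /\ exists2 G, G `<=` V & is_join G p.

Definition min_gen (G : set pt) (p : pt) : Prop :=
  is_join G p /\ forall v, G v -> ~ is_join (G `\ v) p.

Definition Uflat (V : set pt) (i : 'I_d) (v : pt) : set pt :=
  [set p | surface V p /\ sdom_i i p v].

Definition sim_i (V : set pt) (i : 'I_d) (v w : pt) : Prop :=
  V v /\ V w /\ (Uflat V i v `&` Uflat V i w) !=set0.

Definition Fflat (V : set pt) (i : 'I_d) (v : pt) : set pt :=
  closure (\bigcup_(w in [set w | clos_refl_trans pt (sim_i V i) v w]) Uflat V i w).

Definition is_flat (V : set pt) (i : 'I_d) (F : set pt) : Prop :=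
  exists2 v, V v & F = Fflat V i v.

Definition characteristic (V : set pt) (p : pt) : Prop :=
  surface V p /\ forall i, exists2 F, is_flat V i F & F p.

Definition degenerate (V : set pt) : Prop :=
  exists p x u v i j, [/\ characteristic V p, Dset V p x, Dset V p u, Dset V p v
    & [/\ i != j,
       coord u i < coord v i /\ coord v i = coord x i /\ coord x i = coord p i
     & coord v j < coord u j /\ coord u j = coord x j /\ coord x j = coord p j]].

Definition char_rank (V : set pt) (p : pt) (k : nat) : Prop :=
  characteristic V p /\
  (exists G, G `<=` V /\ min_gen G p) /\
  (forall G, G `<=` V -> min_gen G p -> (G #= `I_k.+1)%card).

Definition partition_of (D : set pt) (k : nat) (P : 'I_k.+1 -> set pt) : Prop :=
  [/\ forall l, P l !=set0,
      forall l m, l != m -> P l `&` P m = set0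
    & \bigcup_(l in [set: 'I_k.+1]) P l = D].

Definition gen_partition (V : set pt) (p : pt) (k : nat) (P : 'I_k.+1 -> set pt) : Prop :=
  partition_of (Dset V p) P /\
  forall G, G `<=` Dset V p ->
    (min_gen G p <-> forall l, exists u, G `&` P l = [set u]).

End OrthSurf.

From Pilot Require Import Defs.
From mathcomp Require Import all_boot all_order all_algebra.
From mathcomp Require Import all_classical all_reals topology normedtype.
From mathcomp Require Import lra.
From Stdlib Require Import Relations.
Import numFieldTopology.Exports.
Set Implicit Arguments. Unset Strict Implicit. Unset Printing Implicit Defensive.
Import Order.TTheory GRing.Theory Num.Theory.
Local Open Scope classical_set_scope.
Local Open Scope ring_scope.
Local Notation coord := Pilot.Defs.coord.

(* Write T(v) for T_p(v). Since V is finite, p is characteristic iff for every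
   coordinate i some x in D_p with i in T(x) forces i into every T(u) contained
   in T(x): near p the flat through x is reached by raising p in the coordinates
   j <> i at which x is tight. Non-degeneracy says that on each T(x) the relation
   "every minimum attaining p_i attains p_j" is total. Together these make the
   sets T(v) pairwise equal or incomparable and give every v a private coordinate
   attained only by minima u with T(u) = T(v). As a subset of D_p generates p iff
   it attains every coordinate, the minimal generating sets are then exactly the
   systems of representatives of T(u) = T(w), whose classes form the partition.
   Conversely, if the minimal generating sets are the transversals of a partition,
   then for each i some block consists of minima attaining p_i, and any of them
   witnesses the criterion above. *)

Definition representatives {T : Type} (D : set T) (E : T -> T -> Prop) (G : set T) :=
  forall y, D y -> (exists2 g, G g & E y g) /\
    (forall g g', G g -> G g' -> E y g -> E y g' -> g = g').

Section Representatives.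
Variables (T : choiceType) (D : set T) (E : T -> T -> Prop).
Hypotheses (E_refl : forall x, D x -> E x x)
  (E_sym : forall {x y}, E x y -> E y x)
  (E_trans : forall {x y z}, E x y -> E y z -> E x z).

Lemma representatives_extend (S : set T) :
  S `<=` D -> (forall a b, S a -> S b -> E a b -> a = b) ->
  exists G, [/\ S `<=` G, G `<=` D & representatives D E G].
Proof.
move=> SD Sfree.
have xget_irr (A : set T) a b : A !=set0 -> xget a A = xget b A.
  by case=> y Ay; rewrite /xget; case: pselect => // -[]; exists y; apply/asboolP.
(* [r x] is a chosen element of the class of [x], taken in [S] when possible. *)
pose cands (C : set T) := if `[< (S `&` C) !=set0 >] then S `&` C else D `&` C.
pose cand x := cands [set y | E x y].
pose r x := xget x (cand x).
have cand_eq a b : E a b -> cand a = cand b.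
  move=> Eab; rewrite /cand; congr cands.
  by apply/seteqP; split=> y /=; [exact: E_trans (E_sym Eab)|exact: E_trans Eab].
have cand_neq0 x : D x -> cand x !=set0.
  move=> Dx; rewrite /cand /cands; case: asboolP => // _.
  by exists x; split=> //; exact: E_refl.
have rP x : D x -> D (r x) /\ E x (r x).
  move=> Dx; have : cand x (r x) by case: (cand_neq0 x Dx) => y; exact: xgetI.
  by rewrite /cand /cands; case: asboolP => _ [rx ?]; split=> //; apply: SD.
have r_eq a b : D a -> E a b -> r a = r b.
  move=> Da Eab; rewrite /r -(cand_eq a b Eab).
  exact/xget_irr/cand_neq0.
have rS s : S s -> r s = s.
  move=> Ss; have Cs : (S `&` [set y | E s y]) s by split=> //; exact/E_refl/SD.
  rewrite /r /cand /cands; case: asboolP => [_|[]]; last by exists s.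
  by apply: xget_unique => // y [Sy Esy]; apply/esym/Sfree.
exists [set g | D g /\ r g = g]; split.
- by move=> s Ss; split; [exact: SD|exact: rS].
- by move=> g [].
move=> y Dy; have [Dr Er] := rP y Dy; split.
  by exists (r y) => //; split=> //; apply/esym/r_eq.
move=> g g' [Dg rg] [_ rg'] Eg Eg'.
by rewrite -rg -rg'; exact: r_eq _ _ Dg (E_trans (E_sym Eg) Eg').
Qed.

Lemma subrel_of_representatives (E' : T -> T -> Prop) :
  (forall x, D x -> E' x x) ->
  (forall G, G `<=` D -> representatives D E G -> representatives D E' G) ->
  forall u w, D u -> D w -> E' u w -> E u w.
Proof.
move=> E'_refl sub u w Du Dw E'uw; apply/not_notP => nEuw.
have uwD : [set u; w] `<=` D by move=> x [|] ->.
have uw_free a b : [set u; w] a -> [set u; w] b -> E a b -> a = b.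
  by move=> [|] -> [|] -> // /E_sym.
have [G [SG GD TG]] := representatives_extend uwD uw_free.
have Gu : G u by apply: SG; left.
have Gw : G w by apply: SG; right.
have [_ uniq] := sub G GD TG u Du.
by apply: nEuw; rewrite (uniq u w Gu Gw (E'_refl u Du) E'uw); exact: E_refl.
Qed.

End Representatives.

Lemma eq_representatives {T : Type} (D : set T) (E E' : T -> T -> Prop) G :
  G `<=` D -> (forall u w, D u -> D w -> (E u w <-> E' u w)) ->
  representatives D E G <-> representatives D E' G.
Proof.
move=> GD EE'.
suff sub E1 E2 : (forall u w, D u -> D w -> (E1 u w <-> E2 u w)) ->
    representatives D E1 G -> representatives D E2 G.
  by split; apply: sub => u w Du Dw; [|symmetry]; exact: EE'.
move=> E12 reps y Dy; have [[g Gg Eyg] uniq] := reps y Dy; split.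
  by exists g => //; apply/(E12 y g Dy (GD g Gg)).
move=> h h' Gh Gh' /(E12 y h Dy (GD h Gh)) Eyh /(E12 y h' Dy (GD h' Gh')).
exact: uniq.
Qed.

Definition same_block {T : Type} {k : nat} (P : 'I_k.+1 -> set T) (u w : T) :=
  exists l, P l u /\ P l w.

Section Partitions.
Variables (R : realType) (d k : nat) (D : set 'rV[R]_d) (P : 'I_k.+1 -> set 'rV[R]_d).
Hypothesis partP : partition_of D P.

Lemma partition_cover y : D y <-> exists l, P l y.
Proof.
have [_ _ <-] := partP; split; first by move=> [l _ Pl]; exists l.
by move=> [l Pl]; exists l.
Qed.

Lemma partition_disj {l m y} : P l y -> P m y -> l = m.
Proof.
have [_ disj _] := partP; move=> Pl Pm; apply/eqP/negP => /negP /disj lm.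
by have : (P l `&` P m) y by []; rewrite lm.
Qed.

Lemma same_block_refl x : D x -> same_block P x x.
Proof. by move=> /partition_cover [l Pl]; exists l. Qed.

Lemma same_block_sym u w : same_block P u w -> same_block P w u.
Proof. by move=> [l [Pu Pw]]; exists l. Qed.

Lemma same_block_trans u v w :
  same_block P u v -> same_block P v w -> same_block P u w.
Proof.
move=> [l [Pu Pv]] [m [Pv' Pw]]; exists l; split=> //.
by rewrite (partition_disj Pv Pv').
Qed.

Lemma representatives_blocksP G : G `<=` D ->
  representatives D (same_block P) G <-> forall l, exists u, G `&` P l = [set u].
Proof.
move=> GD; split.
- move=> TG l; have [/(_ l) [y Py] _ _] := partP.
  have Dy : D y by apply/(partition_cover y); exists l.
  have [[g Gg [m [Pmy Pmg]]] uniq] := TG y Dy.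
  rewrite (partition_disj Pmy Py) in Pmg.
  exists g; apply/seteqP; split=> [x [Gx Px]|x -> //].
  by apply: (uniq x g Gx Gg); exists l.
- move=> one y /partition_cover [l Py]; have [u GPl] := one l.
  have [Gu Pu] : (G `&` P l) u by rewrite GPl.
  have in_block g : G g -> same_block P y g -> g = u.
    move=> Gg [m [Pmy Pmg]]; rewrite (partition_disj Pmy Py) in Pmg.
    by have : (G `&` P l) g by []; rewrite GPl.
  split; first by exists u => //; exists l.
  by move=> g g' Gg Gg' /(in_block g Gg) -> /(in_block g' Gg') ->.
Qed.

Lemma card_representatives_blocks G : G `<=` D ->
  representatives D (same_block P) G -> (G #= `I_k.+1)%card.
Proof.
move=> GD /(representatives_blocksP GD) /choice [f Gf].
have fP l : G (f l) /\ P l (f l) by rewrite -[_ /\ _]/((G `&` P l) (f l)) Gf.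
apply/card_esym/card_set_bijP; exists (fun n => f (inord n)); split.
- by move=> n _; exact: (fP _).1.
- move=> n m; rewrite !inE /= => nk mk fnm.
  have Pmn : P (inord m) (f (inord n)) by rewrite fnm; exact: (fP _).2.
  by have /(congr1 val) := partition_disj (fP (inord n)).2 Pmn; rewrite /= !inordK.
- move=> g Gg; have [l Pl] := (partition_cover g).1 (GD g Gg).
  have : (G `&` P l) g by [].
  by rewrite Gf => ->; exists (val l); [exact: ltn_ord|rewrite inord_val].
Qed.

End Partitions.

Section PartitionOfRepresentatives.
Variables (R : realType) (d k : nat) (D : set 'rV[R]_d).
Variable E : 'rV[R]_d -> 'rV[R]_d -> Prop.
Hypotheses (E_refl : forall x, D x -> E x x)
  (E_sym : forall {x y}, E x y -> E y x)
  (E_trans : forall {x y z}, E x y -> E y z -> E x z).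

Lemma partition_of_representatives G :
  G `<=` D -> representatives D E G -> (G #= `I_k.+1)%card ->
  exists P : 'I_k.+1 -> set 'rV[R]_d, partition_of D P /\
    forall u w, D u -> D w -> (same_block P u w <-> E u w).
Proof.
move=> GD TG /card_esym/card_set_bijP [f [f_fun f_inj f_surj]].
have I_ord (l : 'I_k.+1) : val l \in `I_k.+1 by rewrite inE; exact: ltn_ord.
have Gf (l : 'I_k.+1) : G (f l) by apply: f_fun; exact: ltn_ord.
pose P (l : 'I_k.+1) := [set y | D y /\ E y (f l)].
have block_of y : D y -> exists l, P l y.
  move=> Dy; have [[g Gg Eyg] _] := TG y Dy; have [n nk fn] := f_surj g Gg.
  by exists (Ordinal nk); split=> //; rewrite /= fn.
have P_uniq l m y : P l y -> P m y -> l = m.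
  move=> [Dy El] [_ Em]; have [_ uniq] := TG y Dy.
  apply: val_inj; apply: (f_inj _ _ (I_ord l) (I_ord m)).
  exact: uniq _ _ (Gf l) (Gf m) El Em.
exists P; split; first split.
- by move=> l; exists (f l); split; [exact: GD|exact: E_refl (GD _ (Gf l))].
- move=> l m lm; apply/seteqP; split=> // y [Pl Pm].
  by move: lm; rewrite (P_uniq _ _ _ Pl Pm) eqxx.
- apply/seteqP; split=> [y [l _ []] //|y Dy].
  by have [l Pl] := block_of y Dy; exists l.
move=> u w Du Dw; split=> [[l [[_ Eu] [_ Ew]]]|Euw].
  exact: E_trans Eu (E_sym Ew).
have [l [_ Eu]] := block_of u Du; exists l; split=> //; split=> //.
exact: E_trans (E_sym Euw) Eu.
Qed.

End PartitionOfRepresentatives.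

Section Surface.
Variables (R : realType) (d : nat) (V : set 'rV[R]_d) (p : 'rV[R]_d).
Local Notation D := (Dset V p).
Local Notation Tp := (Tset p).

Definition char_witnessed := forall i, exists x,
  [/\ D x, Tp x i & forall u, D u -> Tp u `<=` Tp x -> Tp u i].

Definition same_Tset a b := Tp a = Tp b.

Definition index_implies i j := forall u, D u -> Tp u i -> Tp u j.

Definition nondegenerate_at := forall x i j, D x -> Tp x i -> Tp x j ->
  index_implies i j \/ index_implies j i.

Lemma is_join_DsetP G : G `<=` D ->
  is_join G p <-> G !=set0 /\ forall i, exists2 v, G v & Tp v i.
Proof.
move=> GD; split=> [[Gne J]|[Gne cov]]; split=> // i.
  by have [_ [v Gv vi]] := J i; exists v.
split; first by move=> v /GD [_]; apply.
by have [v Gv vi] := cov i; exists v.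
Qed.

Lemma join_sub_Dset G : G `<=` V -> is_join G p -> G `<=` D.
Proof. by move=> GV [_ J] v Gv; split=> [|i]; [exact: GV|exact: (J i).1]. Qed.

Lemma generated_join_Dset : generated V p -> is_join D p.
Proof.
move=> [_ [G GV GJ]]; have GD := join_sub_Dset GV GJ.
have [[v Gv] cov] := (is_join_DsetP GD).1 GJ.
apply/(is_join_DsetP (@subset_refl _ D)); split; first by exists v; exact: GD.
by move=> i; have [w Gw wi] := cov i; exists w => //; exact: GD.
Qed.

Lemma is_join_setD G g h : G `<=` D -> is_join G p -> G h -> h <> g ->
  Tp g `<=` Tp h -> is_join (G `\ g) p.
Proof.
move=> GD GJ Gh hg gh; have GgD : G `\ g `<=` D by move=> v [/GD].
have [_ cov] := (is_join_DsetP GD).1 GJ.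
apply/(is_join_DsetP GgD); split; first by exists h.
move=> i; have [v Gv vi] := cov i.
have [vg|vg] := pselect (v = g); last by exists v.
by exists h; [split|apply: gh; rewrite -vg].
Qed.

Lemma Dset_coord_lt u i : D u -> ~ Tp u i -> coord u i < coord p i.
Proof.
by move=> [_ up] nui; rewrite lt_neqAle up andbT; apply/eqP => upi; apply: nui.
Qed.

Lemma Tset_neq0 v : surface V p -> D v -> Tp v !=set0.
Proof.
move=> [_ nsdom] Dv; apply/not_notP => nT; apply: nsdom; exists v => [|i].
  exact: Dv.1.
by apply: Dset_coord_lt => // vi; apply: nT; exists i.
Qed.

Lemma nondegenerate_at_char : characteristic V p -> ~ degenerate V -> nondegenerate_at.
Proof.
move=> chp ndeg x i j Dx xi xj.
case: (pselect (index_implies i j)) => [|nij]; first by left.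
right=> v Dv vj; apply/not_notP => nvi; apply: nij => u Du ui.
apply/not_notP => nuj; apply: ndeg; exists p, x, v, u, i, j; split=> //; split.
- by apply/eqP => ij; apply: nuj; rewrite -ij.
- by rewrite -ui; split; [exact: Dset_coord_lt|split].
- by rewrite -vj; split; [exact: Dset_coord_lt|split].
Qed.

Section NonDegenerate.
Hypotheses (surf : surface V p) (witnessed : char_witnessed)
  (nondeg : nondegenerate_at).

Lemma Tset_sub_eq u w : D u -> D w -> Tp u `<=` Tp w -> Tp u = Tp w.
Proof.
move=> Du Dw uw; apply/seteqP; split=> // i wi; apply/not_notP => nui.
have [x [Dx xi xmin]] := witnessed i.
have [j /not_implyP [uj nxj]] : exists j, ~ (Tp u j -> Tp x j).
  by apply/existsNP => ux; apply/nui/xmin.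
have [ij|ji] := nondeg Dw wi (uw j uj); [exact/nxj/ij|exact/nui/ji].
Qed.

Lemma private_index v : D v ->
  exists i, Tp v i /\ forall u, D u -> Tp u i -> Tp u = Tp v.
Proof.
move=> Dv; pose up i : {set 'I_d} := [set j | `[< index_implies i j >]]%SET.
have upP i j : reflect (index_implies i j) (j \in up i).
  by rewrite inE; exact: asboolP.
(* An index of T(v) with the largest up-set lies below all of T(v). *)
have [i0 /asboolP vi0] := Tset_neq0 surf Dv.
case: (@arg_maxnP _ i0 (fun i => `[< Tp v i >]) (fun i => #|up i|) vi0).
move=> i /asboolP vi imax; exists i; split=> // u Du ui.
apply/esym/Tset_sub_eq => // j vj.
have [ij|ji] := nondeg Dv vi vj; first exact: ij.
apply/not_notP => nuj.
have : up i \proper up j.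
  apply/properP; split.
    by apply/fintype.subsetP => l /upP il; apply/upP => w Dw wj; exact/il/ji.
  by exists j; [apply/upP|apply/upP => ij; exact/nuj/ij].
by move/proper_card; apply/negP; rewrite -leqNgt; apply: imax; apply/asboolP.
Qed.

Lemma min_gen_representatives G : is_join D p -> G `<=` D ->
  min_gen G p <-> representatives D same_Tset G.
Proof.
move=> DJ GD; have [[y0 Dy0] Dcov] := (is_join_DsetP (@subset_refl _ D)).1 DJ.
split.
- move=> [GJ Gmin] y Dy; have [_ Gcov] := (is_join_DsetP GD).1 GJ.
  have [i [yi ypriv]] := private_index Dy; split.
    have [g Gg gi] := Gcov i; exists g => //.
    exact/esym/(ypriv g (GD g Gg) gi).
  move=> g g' Gg Gg' yg yg'; apply/not_notP => gg'.
  apply: (Gmin g' Gg'); apply: (is_join_setD GD GJ Gg) => //.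
  by rewrite /same_Tset -yg' yg.
- move=> reps; have GJ : is_join G p.
    apply/(is_join_DsetP GD); split.
      by have [[g Gg _] _] := reps y0 Dy0; exists g.
    move=> i; have [v Dv vi] := Dcov i; have [[g Gg vg] _] := reps v Dv.
    by exists g; rewrite -?vg.
  split=> // g Gg /(is_join_DsetP (fun v (Gv : (G `\ g) v) => GD v Gv.1)) [_ cov].
  have [i [gi gpriv]] := private_index (GD g Gg).
  have [h [Gh hg] hi] := cov i; have [_ uniq] := reps g (GD g Gg).
  exact/hg/(uniq h g Gh Gg (esym (gpriv h (GD h Gh) hi)) erefl).
Qed.

End NonDegenerate.

Lemma gen_partition_representatives k (P : 'I_k.+1 -> set 'rV[R]_d) G :
  gen_partition V p P -> G `<=` D ->
  min_gen G p <-> representatives D (same_block P) G.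
Proof.
by move=> [partP gp] GD; rewrite (gp G GD) (representatives_blocksP partP GD).
Qed.

Lemma gen_partition_witnessed k (P : 'I_k.+1 -> set 'rV[R]_d) :
  gen_partition V p P -> char_witnessed.
Proof.
move=> gp; have [partP _] := gp.
have reps G := @gen_partition_representatives k P G gp.
have separated u x : D u -> D x -> Tp u `<=` Tp x -> same_block P u x.
  move=> Du Dx ux; apply/not_notP => nux.
  have uxD : [set u; x] `<=` D by move=> y [|] ->.
  have ux_free a b : [set u; x] a -> [set u; x] b -> same_block P a b -> a = b.
    by move=> [|] -> [|] -> // /same_block_sym.
  have [G [SG GD TG]] := representatives_extend (same_block_refl partP)
    (same_block_sym (P:=P)) (same_block_trans partP) uxD ux_free.
  have [GJ Gmin] := (reps G GD).2 TG.
  apply: (Gmin u (SG u (or_introl erefl))).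
  apply: (is_join_setD GD GJ (SG x (or_intror erefl))) => // xu.
  by apply: nux; rewrite xu; apply: (same_block_refl partP Du).
move=> i; case: (pselect (exists l, forall y, P l y -> Tp y i)) => [[l li]|nblock].
  have [/(_ l) [x Px] _ _] := partP.
  have Dx : D x by apply/(partition_cover partP); exists l.
  exists x; split=> // [|u Du ux]; first exact: li.
  have [m [Pu Px']] := separated u x Du Dx ux.
  by apply: li; rewrite -(partition_disj partP Px' Px).
have /choice [h hP] : forall l, exists y, P l y /\ ~ Tp y i.
  move=> l; apply/not_notP => nl; apply: nblock; exists l => y Py.
  by apply/not_notP => nyi; apply: nl; exists y.
have GD : range h `<=` D.
  by move=> _ [l _ <-]; apply/(partition_cover partP); exists l; exact: (hP l).1.
have TG : representatives D (same_block P) (range h).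
  apply/(representatives_blocksP partP GD) => l; exists (h l).
  apply/seteqP; split=> [y [[m _ <-] Py]|y ->].
    by rewrite (partition_disj partP (hP m).1 Py).
  by split; [exists l|exact: (hP l).1].
have [GJ _] := (reps _ GD).2 TG.
have [_ cov] := (is_join_DsetP GD).1 GJ.
by have [_ [l _ <-] /(hP l).2] := cov i.
Qed.

End Surface.

Section Geometry.
Variables (R : realType) (d : nat) (V : set 'rV[R]_d) (p : 'rV[R]_d).
Local Notation D := (Dset V p).
Local Notation Tp := (Tset p).

Lemma coord_gap : finite_set V -> exists2 g : R, 0 < g & forall w, V w -> forall j,
  (coord p j < coord w j -> coord p j + g <= coord w j) /\
  (coord w j < coord p j -> coord w j + g <= coord p j).
Proof.
move=> /finite_seqP [s Vs].
pose dists := [seq `|coord w j - coord p j| | w <- s, j <- enum 'I_d].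
pose g := \big[Num.min/1]_(x <- dists | 0 < x) x.
have g_gt0 : 0 < g by apply: lt_bigmin.
have le_g w j : V w -> coord w j != coord p j -> g <= `|coord w j - coord p j|.
  move=> Vw wpj; apply: ge_bigmin_seq; last by rewrite normr_gt0 subr_eq0.
  by apply: allpairs_f; [move: Vw; rewrite Vs|rewrite mem_enum].
exists g => // w Vw j; split=> lt.
  by have := le_g w j Vw (negbT (gt_eqF lt)); rewrite gtr0_norm ?subr_gt0 //; lra.
by have := le_g w j Vw (negbT (lt_eqF lt)); rewrite ltr0_norm ?subr_lt0 //; lra.
Qed.

Lemma ball_coord (q : 'rV[R]_d) e :
  ball p e q -> forall j, coord p j - e < coord q j < coord p j + e.
Proof. by move=> [_ pq] j; have := pq ord0 j; rewrite /ball /= ltr_distlC. Qed.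

Lemma sim_i_rt_V i x w : clos_refl_trans _ (sim_i V i) x w -> V x -> V w.
Proof. by elim=> [a b [_ []]|//|a b c _ IHab _ IHbc] // /IHab /IHbc. Qed.

Lemma characteristic_witnessed :
  finite_set V -> characteristic V p -> char_witnessed V p.
Proof.
move=> finV [[_ nsdom] flats] i.
have [F [x0 Vx0 ->] Fp] := flats i.
have [g g_gt0 gap] := coord_gap finV.
have [q [[w x0w [[_ nsdom_q] [qwi wqj]]] /ball_coord pq]] :=
  Fp _ (nbhsx_ballx p g g_gt0).
have Vw := sim_i_rt_V x0w Vx0.
have wq j : coord w j <= coord q j.
  by have [->|ji] := eqVneq j i; [rewrite qwi|exact/ltW/wqj].
have Dw : D w.
  split=> // j; rewrite leNgt; apply/negP => lt.
  by have := (gap w Vw j).1 lt; have := pq j; have := wq j; lra.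
have wi : Tp w i.
  apply/eqP; rewrite eq_le (Dw.2 i) andbT leNgt; apply/negP => lt.
  by have := (gap w Vw i).2 lt; have := pq i; rewrite qwi; lra.
exists w; split=> // u Du uw; have Vu := Du.1; apply/not_notP => nui.
apply: nsdom_q; exists u => // j.
have [->|ji] := eqVneq j i.
  by have := (gap u Vu i).2 (Dset_coord_lt Du nui); have := pq i; lra.
have [uj|nuj] := pselect (Tp u j).
  by have := uw j uj; rewrite /Tset /= -uj => ->; exact: wqj.
by have := (gap u Vu j).2 (Dset_coord_lt Du nuj); have := pq j; lra.
Qed.

(* Raise p by a small eps in the coordinates j <> i where x is tight; by the
   gap and the choice of x, no minimum lies strictly below the result. *)
Lemma Uflat_near i x : finite_set V -> D x -> Tp x i ->
  (forall u, D u -> Tp u `<=` Tp x -> Tp u i) ->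
  forall e, 0 < e -> exists q, Uflat V i x q /\ ball p e q.
Proof.
move=> finV [Vx xp] xi xmin e e_gt0.
have [g g_gt0 gap] := coord_gap finV.
pose eps := Num.min (e / 2) (g / 2).
have eps_gt0 : 0 < eps by rewrite lt_min !divr_gt0.
have [eps_e eps_g] : eps <= e / 2 /\ eps <= g / 2 by rewrite !ge_min !lexx orbT.
pose lifted j := (j != i) && (coord p j == coord x j).
pose q : 'rV[R]_d := \row_j (if lifted j then coord p j + eps else coord p j).
have qE j : coord q j = if lifted j then coord p j + eps else coord p j.
  by rewrite /coord mxE.
have pq j : coord p j <= coord q j by rewrite qE; case: ifP => _; lra.
have qi : coord q i = coord p i by rewrite qE /lifted eqxx.
exists q; split; last first.
  split=> // a b; rewrite ord1 /ball /=.
  change (`|coord p b - coord q b| < e); rewrite qE; case: ifP => _.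
    by rewrite opprD addrA subrr add0r normrN gtr0_norm //; lra.
  by rewrite subrr normr0.
split; last first.
  split; first by rewrite qi xi.
  move=> j ji; rewrite qE /lifted ji /=; case: eqP => [<-|pxj]; first lra.
  by rewrite lt_neqAle xp andbT; apply/eqP => xpj; apply: pxj.
split; first by exists x => // j; exact: le_trans (xp j) (pq j).
move=> [w Vw qw]; have [wp|nwp] := pselect (dle w p).
  have wx : Tp w `<=` Tp x.
    move=> j /= pwj; have := qw j; rewrite qE /lifted -pwj.
    by case: ifP => [/andP[_ /eqP]//|_]; rewrite ltxx.
  by have := qw i; rewrite qi (xmin w (conj Vw wp) wx) ltxx.
have [j /negP] : exists j, ~ coord w j <= coord p j.
  by apply/existsNP => wp; exact/nwp.
rewrite -ltNge => lt; have := (gap w Vw j).1 lt; have := qw j.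
by rewrite qE; case: ifP => _; lra.
Qed.

Lemma witnessed_characteristic : finite_set V -> surface V p ->
  char_witnessed V p -> characteristic V p.
Proof.
move=> finV surf witnessed; split=> // i.
have [x [Dx xi xmin]] := witnessed i.
exists (Fflat V i x); first by exists x => //; case: Dx.
move=> B /nbhs_ballP [e /= e_gt0 eB].
have [q [Uq pq]] := Uflat_near finV Dx xi xmin e_gt0.
by exists q; split; [exists x => //; exact: rt_refl|exact: eB].
Qed.

End Geometry.

Section Corollary.
Variables (R : realType) (d k : nat) (V : set 'rV[R]_d) (p : 'rV[R]_d).
Hypotheses (finV : finite_set V) (ndeg : ~ degenerate V) (genp : generated V p).
Local Notation D := (Dset V p).

Lemma char_min_gen_representatives G : characteristic V p -> G `<=` D ->
  min_gen G p <-> representatives D (same_Tset p) G.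
Proof.
move=> chp GD; apply: (min_gen_representatives genp.1
  (characteristic_witnessed finV chp) (nondegenerate_at_char chp ndeg)
  (generated_join_Dset genp) GD).
Qed.

Lemma char_rank_gen_partition :
  char_rank V p k -> exists P : 'I_k.+1 -> set 'rV[R]_d, gen_partition V p P.
Proof.
move=> [chp [[G0 [G0V G0min]] card]]; have G0D := join_sub_Dset G0V G0min.1.
have [P [partP PE]] := partition_of_representatives (E := same_Tset p)
  (fun _ _ => erefl) (fun _ _ => @esym _ _ _) (fun _ _ _ => @etrans _ _ _ _) G0D
  ((char_min_gen_representatives chp G0D).1 G0min) (card G0 G0V G0min).
exists P; split=> // G GD.
rewrite (char_min_gen_representatives chp GD) -(representatives_blocksP partP GD).
exact: eq_representatives GD (fun u w Du Dw => iff_sym (PE u w Du Dw)).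
Qed.

Lemma gen_partition_char_rank (P : 'I_k.+1 -> set 'rV[R]_d) :
  gen_partition V p P -> char_rank V p k.
Proof.
move=> gp; have [partP _] := gp.
have reps_P G := @gen_partition_representatives _ _ V p k P G gp.
split; first exact: witnessed_characteristic finV genp.1 (gen_partition_witnessed gp).
split.
  have [|G [_ GD GP]] := representatives_extend (same_block_refl partP)
    (same_block_sym (P:=P)) (same_block_trans partP) (sub0set D) _; first by [].
  by exists G; split; [move=> v /GD []|exact/(reps_P G GD)].
move=> G GV Gmin; have GD := join_sub_Dset GV Gmin.1.
by apply: (card_representatives_blocks partP GD); exact/(reps_P G GD).
Qed.

Lemma gen_partition_same_Tset (P : 'I_k.+1 -> set 'rV[R]_d) :
  characteristic V p -> gen_partition V p P ->
  forall u w, D u -> D w -> same_block P u w <-> same_Tset p u w.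
Proof.
move=> chp gp u w Du Dw; have [partP _] := gp.
have reps_P G := @gen_partition_representatives _ _ V p k P G gp.
have reps_T G := @char_min_gen_representatives G chp.
split.
  apply: (subrel_of_representatives (E := same_Tset p) (fun _ _ => erefl)
    (fun _ _ => @esym _ _ _) (fun _ _ _ => @etrans _ _ _ _)
    (same_block_refl partP)) => // G GD.
  by move=> /(reps_T G GD) /(reps_P G GD).
apply: (subrel_of_representatives (same_block_refl partP) (same_block_sym (P:=P))
  (same_block_trans partP) (E' := same_Tset p) (fun _ _ => erefl)) => // G GD.
by move=> /(reps_P G GD) /(reps_T G GD).
Qed.

End Corollary.

Theorem corollary4p8 (R : realType) (d : nat) (V : set 'rV[R]_d) (k : nat)
    (p : 'rV[R]_d) :
  finite_set V -> antichain V -> ~ degenerate V -> generated V p ->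
  (char_rank V p k <-> exists P : 'I_k.+1 -> set 'rV[R]_d, gen_partition V p P) /\
  (char_rank V p k ->
     forall P : 'I_k.+1 -> set 'rV[R]_d, gen_partition V p P ->
     forall u w, Dset V p u -> Dset V p w ->
       ((exists l, P l u /\ P l w) <-> Tset p u = Tset p w)).
Proof.
move=> finV _ ndeg genp; split.
  split; first exact: char_rank_gen_partition finV ndeg genp.
  by move=> [P]; exact (@gen_partition_char_rank _ _ k _ _ finV genp P).
move=> [chp _] P gp u w.
exact: (gen_partition_same_Tset finV ndeg genp chp gp).
Qed.
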